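(* Let $\mathcal{P}=\langle a_1,\dots,a_{3s},T\rangle$ be a 3-Partition instance satisfying properties (1)–(3) below, and let $\mathcal{G}(\mathcal{P})$ be the Tetris game constructed below. If $\mathcal{P}$ is a ''yes'' instance, then there is a trajectory sequence for $\mathcal{G}(\mathcal{P})$ that clears every row of the gameboard (leaving it completely empty) without triggering a loss.
   Context: 3-Partition: given non-negative integers $a_1,\dots,a_{3s}$ and $T$ with $T/4<a_i<T/2$ and $\sum a_i=sT$, decide whether $\{1,\dots,3s\}$ can be partitioned into $s$ sets $A_1,\dots,A_s$ with $\sum_{i\in A_j}a_i=T$ for all $j$ (a ''yes'' instance). Properties: (1) any subset summing to $T$ has exactly 3 elements; (2) $T$ is even; (3) any subset whose sum is not $T$ has sum differing from $T$ by at least $3s$. Tetris rules: an $m\times n$ gameboard of filled/unfilled gridsquares (rows numbered $1$ to $m$ from the bottom); the seven tetrominoes $\mathsf{Sq}$ (square), $\mathsf{LG}$, $\mathsf{RG}$ (left/right ''gun'', i.e. J/L shapes), $\mathsf{LS}$, $\mathsf{RS}$ (left/right ''snake'', i.e. S/Z shapes), $\mathsf{I}$ (four in a line), $\mathsf{T}$; pieces enter at the top, may be rotated (instantaneous rotation about a fixed center of the piece, legal iff the result overlaps no filled gridsquare), slid left/right one column, dropped one row when the gridsquares beneath are open, and fixed when a gridsquare below is filled; completely filled rows are cleared with higher rows moving down; a loss occurs if the next piece's initial position is blocked. Construction of $\mathcal{G}(\mathcal{P})$: the board has $6s+3$ columns and $6T+22+3s+c$ rows, where $c$ is the constant neighborhood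 size of the rotation model; the top $3s+c$ rows are empty. In the bottom $6T+22$ rows, the columns are grouped into $s$ buckets of six columns followed by a three-column lock. In each bucket: columns 1 and 2 are empty except their lowest four rows are filled; column 3 is completely empty; columns 4 and 5 are filled in every row $h\not\equiv 5\pmod 6$ and empty in every row $h\equiv 5\pmod 6$; column 6 is completely filled. In the lock (counting only the bottom $6T+22$ rows, whose top row is row $6T+22$): its first column is filled except in its two highest rows; its second column is filled except in its highest row; its third column is empty except in its second-highest row. The piece sequence: for each $i=1,\dots,3s$ in order, the pieces $\mathsf{I},\mathsf{LG},\mathsf{Sq}$, then the block $\mathsf{LG},\mathsf{LS},\mathsf{LG},\mathsf{LG},\mathsf{Sq}$ repeated $a_i$ times, then $\mathsf{Sq},\mathsf{Sq}$; after these, $s$ copies of $\mathsf{I}$, then one $\mathsf{RG}$, then $3T/2+5$ copies of $\mathsf{I}$. *)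

From Stdlib Require Import ZArith List Arith Bool.
Import ListNotations.

Inductive piece := Sq | LG | RG | LS | RS | Ip | Tp.

(* Each piece lives in a k x k bounding box; rotation is rotation of the
   box by 90 degrees about its centre (a fixed centre of the piece).
   Offsets (dx, dy): dx = columns to the right, dy = rows upward, measured
   from the bottom-left square of the box. *)
Definition box_size (p : piece) : Z :=
  match p with Sq => 2 | Ip => 4 | _ => 3 end%Z.

Definition spawn_shape (p : piece) : list (Z * Z) :=
  match p with
  | Sq => [(0,0); (1,0); (0,1); (1,1)]
  | Ip => [(0,2); (1,2); (2,2); (3,2)]
  | Tp => [(0,1); (1,1); (2,1); (1,2)]
  | LG => [(0,2); (0,1); (1,1); (2,1)]
  | RG => [(2,2); (0,1); (1,1); (2,1)]
  | LS => [(0,2); (1,2); (1,1); (2,1)]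
  | RS => [(0,1); (1,1); (1,2); (2,2)]
  end%Z.

Definition rot_cw (k : Z) (c : Z * Z) : Z * Z := (snd c, k - 1 - fst c)%Z.

Definition orient_cells (p : piece) (r : nat) : list (Z * Z) :=
  map (fun c => Nat.iter (r mod 4) (rot_cw (box_size p)) c) (spawn_shape p).

(* Neighbourhood size c of this rotation model (all rotations happen
   inside a 4 x 4 box). *)
Definition rot_nbhd : nat := 4.

(* State of the falling piece: bottom-left corner of its box and its
   orientation. *)
Record pstate := mkPS { px : Z; py : Z; pr : nat }.

Definition piece_cells (p : piece) (st : pstate) : list (Z * Z) :=
  map (fun c => (px st + fst c, py st + snd c)%Z) (orient_cells p (pr st)).

Inductive move := MLeft | MRight | MDown | MRotCW | MRotCCW.

Definition apply_move (mv : move) (st : pstate) : pstate :=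
  match mv with
  | MLeft   => mkPS (px st - 1)%Z (py st) (pr st)
  | MRight  => mkPS (px st + 1)%Z (py st) (pr st)
  | MDown   => mkPS (px st) (py st - 1)%Z (pr st)
  | MRotCW  => mkPS (px st) (py st) ((pr st + 1) mod 4)
  | MRotCCW => mkPS (px st) (py st) ((pr st + 3) mod 4)
  end.

(* Boards: B x y = true iff the square in column x, row y is filled.     *)
(* Columns 1..n from the left, rows 1..m from the bottom.               *)

Definition board := nat -> nat -> bool.

Definition cell_free (n m : nat) (B : board) (c : Z * Z) : bool :=
  (1 <=? fst c)%Z && (fst c <=? Z.of_nat n)%Z &&
  (1 <=? snd c)%Z && (snd c <=? Z.of_nat m)%Z &&
  negb (B (Z.to_nat (fst c)) (Z.to_nat (snd c))).

Definition fits (n m : nat) (B : board) (p : piece) (st : pstate) : bool :=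
  forallb (cell_free n m B) (piece_cells p st).

Definition spawn (n m : nat) (p : piece) : pstate :=
  mkPS (Z.of_nat (n / 2) - 1)%Z (Z.of_nat m - box_size p + 1)%Z 0.

Fixpoint follow (n m : nat) (B : board) (p : piece) (mvs : list move)
    (st : pstate) : option pstate :=
  match mvs with
  | [] => Some st
  | mv :: r =>
      let st' := apply_move mv st in
      if fits n m B p st' then follow n m B p r st' else None
  end.

Definition add_cells (B : board) (cs : list (Z * Z)) : board :=
  fun x y => B x y ||
    existsb (fun c => Z.eqb (fst c) (Z.of_nat x) && Z.eqb (snd c) (Z.of_nat y)) cs.

Definition row_full (n : nat) (B : board) (y : nat) : bool :=
  forallb (fun x => B x y) (seq 1 n).

(* clear completely filled rows; higher rows move down, empty rows enter
   at the top *)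
Definition clear_rows (n m : nat) (B : board) : board :=
  let kept := filter (fun y => negb (row_full n B y)) (seq 1 m) in
  fun x y => if (1 <=? y) && (y <=? length kept)
             then B x (nth (y - 1) kept 0) else false.

(* One piece: it must appear at its (unblocked) initial position, perform
   legal moves, and is fixed once a further drop is impossible.  None
   signals a loss or an illegal trajectory. *)
Definition place (n m : nat) (B : board) (p : piece) (mvs : list move)
    : option board :=
  let st0 := spawn n m p in
  if fits n m B p st0 then
    match follow n m B p mvs st0 with
    | Some st =>
        if fits n m B p (apply_move MDown st) then None
        else Some (clear_rows n m (add_cells B (piece_cells p st)))
    | None => None
    end
  else None.

Fixpoint play (n m : nat) (B : board) (ps : list piece)
    (traj : list (list move)) : option board :=
  match ps, traj with
  | [], [] => Some B
  | p :: ps', t :: tr' =>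
      match place n m B p t with
      | Some B' => play n m B' ps' tr'
      | None => None
      end
  | _, _ => None
  end.

(* a = [a_1; ...; a_{3s}], indices 0 .. 3s-1; a subset is a selector *)
Definition sum_sel (a : list nat) (sel : nat -> bool) : nat :=
  list_sum (map (fun i => if sel i then nth i a 0 else 0) (seq 0 (length a))).

Definition card_sel (a : list nat) (sel : nat -> bool) : nat :=
  length (filter sel (seq 0 (length a))).

Definition three_partition_instance (s T : nat) (a : list nat) : Prop :=
  length a = 3 * s /\
  (forall i, i < 3 * s -> T < 4 * nth i a 0 /\ 2 * nth i a 0 < T) /\
  list_sum a = s * T.

Definition tp_prop1 (s T : nat) (a : list nat) : Prop :=
  forall sel, sum_sel a sel = T -> card_sel a sel = 3.
Definition tp_prop2 (T : nat) : Prop := Nat.Even T.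
Definition tp_prop3 (s T : nat) (a : list nat) : Prop :=
  forall sel, sum_sel a sel <> T ->
    sum_sel a sel + 3 * s <= T \/ T + 3 * s <= sum_sel a sel.

(* partition into A_0..A_{s-1}: element i goes to block g i *)
Definition yes_instance (s T : nat) (a : list nat) : Prop :=
  exists g : nat -> nat,
    (forall i, i < 3 * s -> g i < s) /\
    (forall j, j < s -> sum_sel a (fun i => Nat.eqb (g i) j) = T).

Definition G_width (s : nat) : nat := 6 * s + 3.
Definition G_height (s T : nat) : nat := 6 * T + 22 + 3 * s + rot_nbhd.

Definition G_init (s T : nat) : board := fun x y =>
  if (1 <=? x) && (x <=? 6 * s + 3) && (1 <=? y) && (y <=? 6 * T + 22) then
    if x <=? 6 * s then
      (* column (x-1) mod 6 + 1 of a bucket *)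
      match (x - 1) mod 6 with
      | 0 | 1 => y <=? 4
      | 2 => false
      | 3 | 4 => negb (Nat.eqb (y mod 6) 5)
      | _ => true
      end
    else
      (* lock column x - 6s *)
      match x - 6 * s with
      | 1 => y <=? 6 * T + 20
      | 2 => y <=? 6 * T + 21
      | _ => Nat.eqb y (6 * T + 21)
      end
  else false.

Definition G_pieces (s T : nat) (a : list nat) : list piece :=
  flat_map (fun ai => [Ip; LG; Sq] ++ concat (repeat [LG; LS; LG; LG; Sq] ai)
                      ++ [Sq; Sq]) a
  ++ repeat Ip s ++ [RG] ++ repeat Ip (3 * T / 2 + 5).

From Stdlib Require Import ZArith List Arith Bool Lia ZifyNat ZifyBool.
Import ListNotations.

(* Every element a_i is dropped into the bucket of the block of the partition containing i,
   and its pieces tile that bucket: I, LG, Sq complete the rows up to the next notch row,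
   each block LG, LS, LG, LG, Sq adds six complete rows, and the final Sq, Sq restore the initial
   profile six rows higher, so the bucket rises by 6 (a_i + 1) rows.  As every block has
   three elements summing to T, all buckets reach height 6T + 18, and one I each tops them
   off at 6T + 22.  Until then the lock keeps every row incomplete; the RG completes the
   top two rows, and the remaining 6T + 20 = 4 (3T/2 + 5) rows are cleared four at a time
   by vertical I pieces in the last column. *)

(** * Reachability *)

Lemma forallb_ext_in {A} (f g : A -> bool) l :
  (forall x, In x l -> f x = g x) -> forallb f l = forallb g l.
Proof. induction l as [|x l IH]; intros H; cbn in *; [|rewrite H, IH]; auto. Qed.

Section Game.

Variables n m : nat.

Definition board_eq (B1 B2 : board) : Prop :=
  forall x y, 1 <= x <= n -> 1 <= y <= m -> B1 x y = B2 x y.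

Lemma board_eq_refl B : board_eq B B.
Proof. now intros x y _ _. Qed.

Lemma board_eq_sym B1 B2 : board_eq B1 B2 -> board_eq B2 B1.
Proof. intros H x y Hx Hy; symmetry; auto. Qed.

Lemma board_eq_trans B1 B2 B3 : board_eq B1 B2 -> board_eq B2 B3 -> board_eq B1 B3.
Proof. intros H12 H23 x y Hx Hy; rewrite H12; auto. Qed.

Lemma cell_free_board_eq B1 B2 c :
  board_eq B1 B2 -> cell_free n m B1 c = cell_free n m B2 c.
Proof.
  intros HB; destruct c as [a b]; unfold cell_free; cbn [fst snd].
  destruct (Z.leb_spec 1 a), (Z.leb_spec a (Z.of_nat n)),
    (Z.leb_spec 1 b), (Z.leb_spec b (Z.of_nat m)); cbn [andb]; trivial.
  rewrite HB; trivial; lia.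
Qed.

Lemma fits_board_eq B1 B2 p st :
  board_eq B1 B2 -> fits n m B1 p st = fits n m B2 p st.
Proof.
  intros HB; apply forallb_ext_in; intros c _; now apply cell_free_board_eq.
Qed.

Lemma follow_board_eq B1 B2 p mvs st :
  board_eq B1 B2 -> follow n m B1 p mvs st = follow n m B2 p mvs st.
Proof.
  intros HB; revert st; induction mvs as [|mv mvs IH]; intros st; cbn; trivial.
  now rewrite (fits_board_eq B1 B2), IH.
Qed.

Lemma clear_rows_board_eq B1 B2 :
  board_eq B1 B2 -> board_eq (clear_rows n m B1) (clear_rows n m B2).
Proof.
  intros HB x y Hx Hy; unfold clear_rows.
  assert (Hkept : filter (fun z => negb (row_full n B1 z)) (seq 1 m)
                = filter (fun z => negb (row_full n B2 z)) (seq 1 m)).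
  { apply filter_ext_in; intros z Hz%in_seq; f_equal.
    apply forallb_ext_in; intros x' Hx'%in_seq; apply HB; lia. }
  rewrite Hkept; set (kept := filter _ _).
  destruct (Nat.leb_spec 1 y), (Nat.leb_spec y (length kept)); cbn [andb]; trivial.
  assert (Hin : In (nth (y - 1) kept 0) kept) by (apply nth_In; lia).
  apply filter_In in Hin as [Hin%in_seq _]; apply HB; lia.
Qed.

Lemma place_board_eq B1 B2 p t R1 :
  board_eq B1 B2 -> place n m B1 p t = Some R1 ->
  exists R2, place n m B2 p t = Some R2 /\ board_eq R1 R2.
Proof.
  intros HB; unfold place.
  rewrite !(fits_board_eq B1 B2), (follow_board_eq B1 B2) by exact HB.
  destruct (fits n m B2 p (spawn n m p)); [|discriminate].
  destruct (follow n m B2 p t (spawn n m p)) as [st|]; [|discriminate].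
  rewrite (fits_board_eq B1 B2) by exact HB.
  destruct (fits n m B2 p (apply_move MDown st)); [discriminate|].
  intros [= <-]; eexists; split; [reflexivity|].
  apply clear_rows_board_eq; intros x y Hx Hy; unfold add_cells; rewrite HB; auto.
Qed.

Lemma play_board_eq ps : forall B1 B2 traj R1,
  board_eq B1 B2 -> play n m B1 ps traj = Some R1 ->
  exists R2, play n m B2 ps traj = Some R2 /\ board_eq R1 R2.
Proof.
  induction ps as [|p ps IH]; intros B1 B2 [|t traj] R1 HB; cbn; try discriminate.
  - intros [= <-]; eauto.
  - destruct (place n m B1 p t) as [R|] eqn:Hp; [|discriminate].
    destruct (place_board_eq B1 B2 p t R HB Hp) as (R' & -> & HR).
    now apply IH.
Qed.

Lemma play_app ps1 ps2 : forall B traj1 traj2 R,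
  play n m B ps1 traj1 = Some R ->
  play n m B (ps1 ++ ps2) (traj1 ++ traj2) = play n m R ps2 traj2.
Proof.
  induction ps1 as [|p ps1 IH]; intros B [|t traj1] traj2 R; cbn; try discriminate.
  - now intros [= <-].
  - destruct (place n m B p t); [apply IH | discriminate].
Qed.

Definition reachable (B : board) (ps : list piece) (B' : board) : Prop :=
  exists traj R, play n m B ps traj = Some R /\ board_eq R B'.

Lemma reachable_nil B : reachable B [] B.
Proof. exists [], B; split; [reflexivity | apply board_eq_refl]. Qed.

Lemma reachable_place B p t R B' :
  place n m B p t = Some R -> board_eq R B' -> reachable B [p] B'.
Proof. intros Hp HR; exists [t], R; cbn; now rewrite Hp. Qed.

Lemma reachable_board_eq_l B1 B2 ps B' :
  board_eq B1 B2 -> reachable B2 ps B' -> reachable B1 ps B'.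
Proof.
  intros HB (traj & R & Hplay & HR).
  destruct (play_board_eq ps B2 B1 traj R (board_eq_sym _ _ HB) Hplay) as (R' & ? & ?).
  exists traj, R'; split; [assumption|].
  eapply board_eq_trans; [apply board_eq_sym|]; eassumption.
Qed.

Lemma reachable_board_eq_r B ps B1 B2 :
  reachable B ps B1 -> board_eq B1 B2 -> reachable B ps B2.
Proof.
  intros (traj & R & Hplay & HR) HB; exists traj, R; split; [assumption|].
  eapply board_eq_trans; eassumption.
Qed.

Lemma reachable_app B ps1 B1 ps2 B2 :
  reachable B ps1 B1 -> reachable B1 ps2 B2 -> reachable B (ps1 ++ ps2) B2.
Proof.
  intros (traj1 & R1 & Hplay1 & HR1) Hreach2.
  destruct (reachable_board_eq_l R1 B1 ps2 B2 HR1 Hreach2) as (traj2 & R2 & ? & ?).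
  exists (traj1 ++ traj2), R2; split; [|assumption].
  now rewrite (play_app ps1 ps2 B traj1 traj2 R1 Hplay1).
Qed.

End Game.

(** * Dropping a piece *)

Definition at_pos (X Y r : nat) : pstate := mkPS (Z.of_nat X) (Z.of_nat Y) r.

Definition shape (p : piece) (r : nat) : list (nat * nat) :=
  map (fun c => (Z.to_nat (fst c), Z.to_nat (snd c))) (orient_cells p r).

Lemma orient_cells_shape p r c :
  In c (orient_cells p r) ->
  exists a b, c = (Z.of_nat a, Z.of_nat b) /\ In (a, b) (shape p r).
Proof.
  intros Hc; exists (Z.to_nat (fst c)), (Z.to_nat (snd c)); split.
  - revert Hc; unfold orient_cells; assert (Hr : r mod 4 < 4) by lia.
    destruct (r mod 4) as [|[|[|[|]]]]; [..|lia]; destruct p; cbn;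
      intros H; repeat destruct H as [H|H]; subst; easy.
  - apply in_map_iff; now exists c.
Qed.

Section Placement.

Variables (n m : nat) (B : board) (p : piece).

Lemma fits_at_pos X Y r :
  (forall a b, In (a, b) (shape p r) ->
     1 <= X + a <= n /\ 1 <= Y + b <= m /\ B (X + a) (Y + b) = false) ->
  fits n m B p (at_pos X Y r) = true.
Proof.
  intros Hfree; apply forallb_forall; intros c Hc.
  apply in_map_iff in Hc as (c' & <- & Hin).
  destruct (orient_cells_shape _ _ _ Hin) as (a & b & -> & Hab).
  destruct (Hfree _ _ Hab) as (HX & HY & Hcell).
  unfold cell_free, at_pos; cbn [fst snd px py].
  rewrite <- !Nat2Z.inj_add, !Nat2Z.id, Hcell; lia.
Qed.

Lemma fits_at_pos_blocked X Y r a b :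
  In (a, b) (shape p r) -> Y + b = 0 \/ B (X + a) (Y + b) = true ->
  fits n m B p (at_pos X Y r) = false.
Proof.
  intros Hin Hblocked; apply in_map_iff in Hin as (c & Hc & Hin).
  destruct (orient_cells_shape _ _ _ Hin) as (a' & b' & -> & _).
  cbn in Hc; rewrite !Nat2Z.id in Hc; injection Hc as <- <-.
  apply not_true_iff_false; intros Hfits.
  assert (Hfree : cell_free n m B (Z.of_nat X + Z.of_nat a', Z.of_nat Y + Z.of_nat b')%Z = true).
  { apply (proj1 (forallb_forall _ _) Hfits), in_map_iff; now exists (Z.of_nat a', Z.of_nat b'). }
  unfold cell_free in Hfree; cbn [fst snd] in Hfree.
  rewrite <- !Nat2Z.inj_add, !Nat2Z.id in Hfree.
  destruct Hblocked as [Hb0|Hcell]; [|rewrite Hcell in Hfree]; lia.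
Qed.

Lemma add_cells_at_pos X Y r x y :
  add_cells B (piece_cells p (at_pos X Y r)) x y =
  B x y || existsb (fun c => (X + fst c =? x) && (Y + snd c =? y)) (shape p r).
Proof.
  unfold add_cells, piece_cells, shape, at_pos; f_equal; cbn [px py pr].
  assert (Hnat : forall c, In c (orient_cells p r) ->
            exists a b, c = (Z.of_nat a, Z.of_nat b)).
  { intros c Hc; destruct (orient_cells_shape _ _ _ Hc) as (a & b & Hab & _); eauto. }
  induction (orient_cells p r) as [|c l IH]; [reflexivity|]; cbn.
  destruct (Hnat c (or_introl eq_refl)) as (a & b & ->).
  rewrite IH by (intros; apply Hnat; now right); cbn; rewrite !Nat2Z.id; f_equal; lia.
Qed.

Lemma follow_app l1 l2 st :
  follow n m B p (l1 ++ l2) st =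
  match follow n m B p l1 st with Some st' => follow n m B p l2 st' | None => None end.
Proof.
  revert st; induction l1 as [|mv l1 IH]; intros st; cbn; [reflexivity|].
  destruct (fits n m B p (apply_move mv st)); [apply IH | reflexivity].
Qed.

Lemma follow_down X Y r e :
  (forall i, i < e -> fits n m B p (at_pos X (Y + i) r) = true) ->
  follow n m B p (repeat MDown e) (at_pos X (Y + e) r) = Some (at_pos X Y r).
Proof.
  revert Y; induction e as [|e IH]; intros Y Hfit; cbn [repeat follow].
  - now rewrite Nat.add_0_r.
  - replace (apply_move MDown (at_pos X (Y + S e) r)) with (at_pos X (Y + e) r)
      by (unfold at_pos, apply_move; cbn [px py pr]; f_equal; lia).
    rewrite Hfit by lia; apply IH; intros i Hi; apply Hfit; lia.
Qed.

Lemma follow_left X Y r d :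
  (forall i, i < d -> fits n m B p (at_pos (X + i) Y r) = true) ->
  follow n m B p (repeat MLeft d) (at_pos (X + d) Y r) = Some (at_pos X Y r).
Proof.
  revert X; induction d as [|d IH]; intros X Hfit; cbn [repeat follow].
  - now rewrite Nat.add_0_r.
  - replace (apply_move MLeft (at_pos (X + S d) Y r)) with (at_pos (X + d) Y r)
      by (unfold at_pos, apply_move; cbn [px py pr]; f_equal; lia).
    rewrite Hfit by lia; apply IH; intros i Hi; apply Hfit; lia.
Qed.

Lemma follow_right X Y r d :
  (forall i, 1 <= i <= d -> fits n m B p (at_pos (X + i) Y r) = true) ->
  follow n m B p (repeat MRight d) (at_pos X Y r) = Some (at_pos (X + d) Y r).
Proof.
  revert X; induction d as [|d IH]; intros X Hfit; cbn [repeat follow].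
  - now rewrite Nat.add_0_r.
  - replace (apply_move MRight (at_pos X Y r)) with (at_pos (X + 1) Y r)
      by (unfold at_pos, apply_move; cbn [px py pr]; f_equal; lia).
    rewrite Hfit by lia.
    rewrite IH by (intros i Hi; rewrite <- Nat.add_assoc; apply Hfit; lia).
    do 2 f_equal; lia.
Qed.

Lemma follow_rotate X Y r k :
  r + k <= 3 ->
  (forall r', r < r' <= r + k -> fits n m B p (at_pos X Y r') = true) ->
  follow n m B p (repeat MRotCW k) (at_pos X Y r) = Some (at_pos X Y (r + k)).
Proof.
  revert r; induction k as [|k IH]; intros r Hk Hfit; cbn [repeat follow].
  - now rewrite Nat.add_0_r.
  - replace (apply_move MRotCW (at_pos X Y r)) with (at_pos X Y (r + 1))
      by (unfold at_pos, apply_move; cbn [px py pr]; f_equal; lia).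
    rewrite Hfit by lia.
    rewrite IH by (intros; try apply Hfit; lia).
    do 2 f_equal; lia.
Qed.

Definition slide (X0 X : nat) : list move :=
  if X0 <=? X then repeat MRight (X - X0) else repeat MLeft (X0 - X).

Lemma follow_slide X0 X Y r :
  (forall X', X0 <= X' <= X \/ X <= X' <= X0 -> fits n m B p (at_pos X' Y r) = true) ->
  follow n m B p (slide X0 X) (at_pos X0 Y r) = Some (at_pos X Y r).
Proof.
  intros Hfit; unfold slide; destruct (Nat.leb_spec X0 X).
  - rewrite follow_right by (intros; apply Hfit; lia); do 2 f_equal; lia.
  - replace (at_pos X0 Y r) with (at_pos (X + (X0 - X)) Y r) by (f_equal; lia).
    apply follow_left; intros; apply Hfit; lia.
Qed.

(* The piece turns where it enters, slides to column [X], drops, and is finally tucked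
   [tuck] columns to the right under an overhang. *)
Definition drop_moves (rots X0 X drop tuck : nat) : list move :=
  repeat MRotCW rots ++ slide X0 X ++ repeat MDown drop ++ repeat MRight tuck.

Lemma place_drop_moves rots X0 Y0 X Y tuck :
  spawn n m p = at_pos X0 Y0 0 ->
  rots <= 3 ->
  (forall r, r <= rots -> fits n m B p (at_pos X0 Y0 r) = true) ->
  (forall X', X0 <= X' <= X \/ X <= X' <= X0 -> fits n m B p (at_pos X' Y0 rots) = true) ->
  1 <= Y <= Y0 ->
  (forall Y', Y <= Y' <= Y0 -> fits n m B p (at_pos X Y' rots) = true) ->
  (forall i, i <= tuck -> fits n m B p (at_pos (X + i) Y rots) = true) ->
  fits n m B p (at_pos (X + tuck) (Y - 1) rots) = false ->
  place n m B p (drop_moves rots X0 X (Y0 - Y) tuck)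
  = Some (clear_rows n m (add_cells B (piece_cells p (at_pos (X + tuck) Y rots)))).
Proof.
  intros Hspawn Hrots Hturn Hslide HY Hdrop Htuck Hland; unfold place, drop_moves.
  rewrite Hspawn, Hturn by lia.
  rewrite follow_app, (follow_rotate _ _ 0) by (intros; try apply Hturn; lia); cbn [plus].
  rewrite follow_app, follow_slide by exact Hslide.
  rewrite follow_app.
  replace (at_pos X Y0 rots) with (at_pos X (Y + (Y0 - Y)) rots) by (f_equal; lia).
  rewrite follow_down by (intros; apply Hdrop; lia).
  rewrite follow_right by (intros; apply Htuck; lia).
  replace (apply_move MDown (at_pos (X + tuck) Y rots)) with (at_pos (X + tuck) (Y - 1) rots)
    by (unfold at_pos; cbn; f_equal; lia).
  now rewrite Hland.
Qed.

End Placement.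

Lemma row_full_hole n B x y : 1 <= x <= n -> B x y = false -> row_full n B y = false.
Proof.
  intros Hx Hxy; apply not_true_iff_false; intros Hfull.
  rewrite (proj1 (forallb_forall _ _) Hfull x) in Hxy by (apply in_seq; lia).
  discriminate.
Qed.

Lemma row_full_intro n B y : (forall x, 1 <= x <= n -> B x y = true) -> row_full n B y = true.
Proof. intros Hrow; apply forallb_forall; intros x Hx%in_seq; apply Hrow; lia. Qed.

Lemma clear_rows_band n m B k r :
  k + r <= m ->
  (forall y, k < y <= k + r -> row_full n B y = true) ->
  (forall y, 1 <= y <= m -> y <= k \/ k + r < y -> row_full n B y = false) ->
  forall x y, 1 <= y <= m ->
  clear_rows n m B x y = if y <=? k then B x y else if y <=? m - r then B x (y + r) else false.
Proof.
  intros Hkr Hfull Hkept x y Hy; unfold clear_rows.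
  replace (seq 1 m) with (seq 1 k ++ seq (1 + k) r ++ seq (1 + k + r) (m - k - r))
    by (rewrite <- !seq_app; f_equal; lia).
  rewrite !filter_app.
  rewrite (filter_ext_in _ (fun _ => true) (seq 1 k)), filter_true
    by (intros z Hz%in_seq; rewrite Hkept; trivial; lia).
  rewrite (filter_ext_in _ (fun _ => false) (seq (1 + k) r)), filter_false
    by (intros z Hz%in_seq; rewrite Hfull; trivial; lia).
  rewrite (filter_ext_in _ (fun _ => true) (seq (1 + k + r) _)), filter_true
    by (intros z Hz%in_seq; rewrite Hkept; trivial; lia).
  cbn [app]; rewrite length_app, !length_seq.
  destruct (Nat.leb_spec y k); [|destruct (Nat.leb_spec y (m - r))].
  - replace ((1 <=? y) && (y <=? k + (m - k - r))) with true by lia.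
    rewrite app_nth1, seq_nth by (rewrite ?length_seq; lia); f_equal; lia.
  - replace ((1 <=? y) && (y <=? k + (m - k - r))) with true by lia.
    rewrite app_nth2, length_seq, seq_nth by (rewrite ?length_seq; lia); f_equal; lia.
  - now replace ((1 <=? y) && (y <=? k + (m - k - r))) with false by lia.
Qed.

Lemma clear_rows_no_full n m B :
  (forall y, 1 <= y <= m -> row_full n B y = false) ->
  forall x y, 1 <= y <= m -> clear_rows n m B x y = B x y.
Proof.
  intros Hkept x y Hy; rewrite (clear_rows_band n m B m 0); trivial; try lia.
  - now replace (y <=? m) with true by lia.
  - intros; apply Hkept; lia.
Qed.

(** * The bucket model of G(P) *)

(* Heights of the first three columns of a bucket; the fourth and fifth columns are
   filled except in the notch rows y = 5 (mod 6) above [notch_ht]; the sixth is full. *)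
Record bucket := Bucket { ht1 : nat; ht2 : nat; ht3 : nat; notch_ht : nat }.

Definition flat_bucket (d : nat) : bucket := Bucket d d d d.

Definition loaded_bucket (c : nat) : bucket := Bucket (c + 4) (c + 4) c c.

Definition bucket_cell (b : bucket) (k y : nat) : bool :=
  match k with
  | 0 => y <=? ht1 b
  | 1 => y <=? ht2 b
  | 2 => y <=? ht3 b
  | 3 | 4 => negb (y mod 6 =? 5) || (y <=? notch_ht b)
  | _ => true
  end.

Definition lock_cell (T k y : nat) : bool :=
  match k with
  | 1 => y <=? 6 * T + 20
  | 2 => y <=? 6 * T + 21
  | _ => y =? 6 * T + 21
  end.

Definition bucket_board (s T : nat) (H : nat -> bucket) : board := fun x y =>
  if (1 <=? x) && (x <=? 6 * s + 3) && (1 <=? y) && (y <=? 6 * T + 22) then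
    if x <=? 6 * s then bucket_cell (H ((x - 1) / 6)) ((x - 1) mod 6) y
    else lock_cell T (x - 6 * s) y
  else false.

Definition set_bucket (H : nat -> bucket) (j : nat) (b : bucket) : nat -> bucket :=
  fun j' => if j' =? j then b else H j'.

Section BucketBoard.

Variables (s T : nat).

Lemma G_init_bucket_board x y : G_init s T x y = bucket_board s T (fun _ => loaded_bucket 0) x y.
Proof.
  unfold G_init, bucket_board.
  destruct (_ && _ && _ && _) eqn:Hin; [|reflexivity].
  destruct (x <=? 6 * s); [|reflexivity].
  destruct ((x - 1) mod 6) as [|[|[|[|[|[|]]]]]]; cbn; lia.
Qed.

Lemma bucket_board_above H x y : 6 * T + 22 < y -> bucket_board s T H x y = false.
Proof.
  intros Hy; unfold bucket_board; replace (y <=? 6 * T + 22) with false by lia.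
  now rewrite andb_false_r.
Qed.

Lemma bucket_board_in_bucket H j x y :
  j < s -> 6 * j < x <= 6 * j + 6 -> 1 <= y ->
  bucket_board s T H x y = (y <=? 6 * T + 22) && bucket_cell (H j) (x - 6 * j - 1) y.
Proof.
  intros Hj Hx Hy; unfold bucket_board.
  replace ((x - 1) / 6) with j by lia; replace ((x - 1) mod 6) with (x - 6 * j - 1) by lia.
  replace (x <=? 6 * s) with true by lia.
  destruct (Nat.leb_spec y (6 * T + 22)); [|now rewrite andb_false_r].
  now replace (_ && _ && _ && _) with true by lia.
Qed.

Lemma bucket_board_in_lock H x y :
  6 * s < x <= 6 * s + 3 -> 1 <= y ->
  bucket_board s T H x y = (y <=? 6 * T + 22) && lock_cell T (x - 6 * s) y.
Proof.
  intros Hx Hy; unfold bucket_board; replace (x <=? 6 * s) with false by lia.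
  destruct (Nat.leb_spec y (6 * T + 22)); [|now rewrite andb_false_r].
  now replace (_ && _ && _ && _) with true by lia.
Qed.

Lemma bucket_board_ext H1 H2 :
  (forall j, j < s -> H1 j = H2 j) -> forall x y, bucket_board s T H1 x y = bucket_board s T H2 x y.
Proof.
  intros HH x y; unfold bucket_board.
  destruct (_ && _ && _ && _) eqn:Hin; [|reflexivity].
  destruct (Nat.leb_spec x (6 * s)); [|reflexivity].
  rewrite HH by lia; reflexivity.
Qed.

Lemma bucket_board_set_bucket_twice H j b1 b2 x y :
  bucket_board s T (set_bucket (set_bucket H j b1) j b2) x y
  = bucket_board s T (set_bucket H j b2) x y.
Proof.
  apply bucket_board_ext; intros j' _; unfold set_bucket; now destruct (j' =? j).
Qed.

Lemma spawn_G p :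
  spawn (G_width s) (G_height s T) p
  = at_pos (3 * s) (6 * T + 3 * s + 27 - Z.to_nat (box_size p)) 0.
Proof.
  unfold spawn, at_pos, G_width, G_height, rot_nbhd.
  f_equal; [|destruct p; cbn [box_size]]; lia.
Qed.

End BucketBoard.

Lemma bucket_board_place s T H j b p X Y r :
  j < s ->
  (forall a c, In (a, c) (shape p r) -> 6 * j < X + a <= 6 * j + 5 /\ 1 <= Y + c <= 6 * T + 22) ->
  (forall k y, k < 6 -> 1 <= y <= 6 * T + 22 ->
     bucket_cell (H j) k y
     || existsb (fun c => (X + fst c =? 6 * j + k + 1) && (Y + snd c =? y)) (shape p r)
     = bucket_cell b k y) ->
  board_eq (G_width s) (G_height s T)
    (clear_rows (G_width s) (G_height s T)
       (add_cells (bucket_board s T H) (piece_cells p (at_pos X Y r))))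
    (bucket_board s T (set_bucket H j b)).
Proof.
  intros Hj Hinside Hcells.
  set (B' := add_cells _ _).
  assert (HB' : forall x y, x <= 6 * j \/ 6 * j + 5 < x \/ 6 * T + 22 < y ->
                B' x y = bucket_board s T H x y).
  { intros x y Hxy; unfold B'; rewrite add_cells_at_pos.
    destruct (existsb _ _) eqn:Hpiece; [|apply orb_false_r].
    apply existsb_exists in Hpiece as ([a c] & Hin%Hinside & Hac); cbn in Hac; lia. }
  (* Below row 6T + 21 the third lock column is empty, above row 6T + 20 the first one. *)
  assert (Hno_full : forall z, 1 <= z -> row_full (6 * s + 3) B' z = false).
  { intros z Hz; destruct (Nat.le_gt_cases z (6 * T + 20)).
    - apply (row_full_hole _ _ (6 * s + 3)); [lia|].
      rewrite HB', bucket_board_in_lock by lia.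
      replace (6 * s + 3 - 6 * s) with 3 by lia; cbn [lock_cell]; lia.
    - apply (row_full_hole _ _ (6 * s + 1)); [lia|].
      destruct (Nat.le_gt_cases z (6 * T + 22)); rewrite HB' by lia;
        [rewrite bucket_board_in_lock | rewrite bucket_board_above]; try lia.
      replace (6 * s + 1 - 6 * s) with 1 by lia; cbn [lock_cell]; lia. }
  unfold G_width, G_height, rot_nbhd; intros x y Hx Hy.
  rewrite clear_rows_no_full by first [lia | intros; apply Hno_full; lia].
  destruct (Nat.le_gt_cases y (6 * T + 22)).
  2: now rewrite HB', !bucket_board_above by lia.
  destruct (Nat.le_gt_cases x (6 * s)).
  2: now rewrite HB', !bucket_board_in_lock by lia.
  rewrite (bucket_board_in_bucket s T (set_bucket H j b) ((x - 1) / 6)) by lia.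
  unfold set_bucket at 1; destruct (Nat.eqb_spec ((x - 1) / 6) j) as [Hxj|Hother].
  - rewrite Hxj; unfold B'; rewrite add_cells_at_pos, (bucket_board_in_bucket s T H j) by lia.
    rewrite <- (Hcells (x - 6 * j - 1) y) by lia.
    replace (6 * j + (x - 6 * j - 1) + 1) with x by lia.
    now replace (y <=? 6 * T + 22) with true by lia.
  - now rewrite HB', (bucket_board_in_bucket s T H ((x - 1) / 6)) by lia.
Qed.

Definition bucket_step (s T j : nat) (ps : list piece) (b b' : bucket) : Prop :=
  forall H, H j = b ->
  reachable (G_width s) (G_height s T) (bucket_board s T H) ps
    (bucket_board s T (set_bucket H j b')).

Lemma bucket_step_nil s T j b : bucket_step s T j [] b b.
Proof.
  intros H Hj; eapply reachable_board_eq_r; [apply reachable_nil|].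
  intros x y _ _; apply bucket_board_ext; intros j' _; unfold set_bucket.
  destruct (Nat.eqb_spec j' j); congruence.
Qed.

Lemma bucket_step_app s T j ps1 ps2 b1 b2 b3 :
  bucket_step s T j ps1 b1 b2 -> bucket_step s T j ps2 b2 b3 ->
  bucket_step s T j (ps1 ++ ps2) b1 b3.
Proof.
  intros Hstep1 Hstep2 H Hj; eapply reachable_app; [now apply Hstep1|].
  eapply reachable_board_eq_r.
  - apply Hstep2; unfold set_bucket; now rewrite Nat.eqb_refl.
  - intros x y _ _; apply bucket_board_set_bucket_twice.
Qed.

(** * Filling one bucket *)

Ltac expand_shape :=
  repeat match goal with
  | H : context [shape ?p ?r] |- _ =>
      let l := eval vm_compute in (shape p r) in change (shape p r) with l in H
  | |- context [shape ?p ?r] =>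
      let l := eval vm_compute in (shape p r) in change (shape p r) with l
  end.

Ltac destruct_in H :=
  cbn [In] in H; repeat destruct H as [[= <- <-]|H]; try contradiction.

Ltac fits_cells :=
  apply fits_at_pos; intros ? ? Hin; expand_shape; destruct_in Hin;
  unfold G_width, G_height, rot_nbhd; (split; [lia | split; [lia |]]).

(* Call as [drop_obligation ltac:(idtac; tac)]; without the [idtac] Ltac would run [tac]
   once, when the argument is evaluated. *)
Ltac drop_obligation eval_cell :=
  lazymatch goal with
  | |- spawn _ _ _ = _ => rewrite spawn_G; f_equal; cbn [box_size]; lia
  | |- forall r, r <= _ -> _ =>
      let r := fresh "r" in
      intros r ?; destruct r as [|[|[|[|]]]]; try lia; fits_cells; eval_cell
  | |- forall _, _ -> fits _ _ _ _ _ = true => intros; fits_cells; eval_cell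
  | |- fits _ _ _ _ _ = false => idtac
  | |- _ => unfold G_height, rot_nbhd; lia
  end.

Ltac eval_bucket_cell j Hj :=
  lazymatch goal with
  | |- bucket_board ?s ?T ?H ?x ?y = _ =>
      first
        [ rewrite bucket_board_above by lia; reflexivity
        | rewrite (bucket_board_in_bucket s T H j x y) by lia; rewrite Hj;
          destruct (x - 6 * j - 1) as [|[|[|[|[|[|]]]]]] eqn:?;
          cbn [bucket_cell ht1 ht2 ht3 notch_ht]; lia ]
  end.

Ltac bucket_update j Hj :=
  apply bucket_board_place;
  [ lia
  | intros ? ? Hin; expand_shape; destruct_in Hin; lia
  | intros k y Hk Hy; expand_shape; cbn [existsb fst snd]; rewrite Hj;
    destruct k as [|[|[|[|[|[|]]]]]]; cbn [bucket_cell ht1 ht2 ht3 notch_ht]; lia ].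

Section BucketSteps.

Variables (s T j : nat).
Hypotheses (Hs : 0 < s) (Hj : j < s).

Lemma bucket_step_Sq h h' h3 N :
  1 <= h -> h' = h + 2 -> h' <= 6 * T + 22 ->
  bucket_step s T j [Sq] (Bucket h h h3 N) (Bucket h' h' h3 N).
Proof.
  intros Hh -> Hroom H HHj; eapply reachable_place.
  - apply (place_drop_moves _ _ _ _ 0 (3 * s) (6 * T + 3 * s + 25) (6 * j + 1) (h + 1) 0);
      drop_obligation ltac:(idtac; eval_bucket_cell j HHj).
    apply (fits_at_pos_blocked _ _ _ _ _ _ _ 0 0); [vm_compute; tauto|].
    right; eval_bucket_cell j HHj.
  - bucket_update j HHj.
Qed.

Lemma bucket_step_I h1 h2 h N :
  h + 4 <= 6 * T + 22 ->
  bucket_step s T j [Ip] (Bucket h1 h2 h N) (Bucket h1 h2 (h + 4) N).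
Proof.
  intros Hroom H HHj; eapply reachable_place.
  - apply (place_drop_moves _ _ _ _ 1 (3 * s) (6 * T + 3 * s + 23) (6 * j + 1) (h + 1) 0);
      drop_obligation ltac:(idtac; eval_bucket_cell j HHj).
    apply (fits_at_pos_blocked _ _ _ _ _ _ _ 2 0); [vm_compute; tauto|].
    destruct (Nat.eq_dec h 0); [left; lia | right; eval_bucket_cell j HHj].
  - bucket_update j HHj.
Qed.

Lemma bucket_step_LG_flat h N :
  1 <= h -> h + 2 <= 6 * T + 22 ->
  bucket_step s T j [LG] (Bucket h h h N) (Bucket (h + 2) (h + 1) (h + 1) N).
Proof.
  intros Hh Hroom H HHj; eapply reachable_place.
  - apply (place_drop_moves _ _ _ _ 0 (3 * s) (6 * T + 3 * s + 24) (6 * j + 1) h 0);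
      drop_obligation ltac:(idtac; eval_bucket_cell j HHj).
    apply (fits_at_pos_blocked _ _ _ _ _ _ _ 0 1); [vm_compute; tauto|].
    right; eval_bucket_cell j HHj.
  - bucket_update j HHj.
Qed.

Lemma bucket_step_LS h N :
  h + 3 <= 6 * T + 22 ->
  bucket_step s T j [LS] (Bucket (h + 2) (h + 1) (h + 1) N) (Bucket (h + 3) (h + 3) (h + 2) N).
Proof.
  intros Hroom H HHj; eapply reachable_place.
  - apply (place_drop_moves _ _ _ _ 0 (3 * s) (6 * T + 3 * s + 24) (6 * j + 1) (h + 1) 0);
      drop_obligation ltac:(idtac; eval_bucket_cell j HHj).
    apply (fits_at_pos_blocked _ _ _ _ _ _ _ 1 1); [vm_compute; tauto|].
    right; eval_bucket_cell j HHj.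
  - bucket_update j HHj.
Qed.

Lemma bucket_step_LG_hook h N :
  h + 4 <= 6 * T + 22 ->
  bucket_step s T j [LG] (Bucket (h + 3) (h + 3) (h + 2) N) (Bucket (h + 4) (h + 4) (h + 4) N).
Proof.
  intros Hroom H HHj; eapply reachable_place.
  - apply (place_drop_moves _ _ _ _ 2 (3 * s) (6 * T + 3 * s + 24) (6 * j + 1) (h + 3) 0);
      drop_obligation ltac:(idtac; eval_bucket_cell j HHj).
    apply (fits_at_pos_blocked _ _ _ _ _ _ _ 2 0); [vm_compute; tauto|].
    right; eval_bucket_cell j HHj.
  - bucket_update j HHj.
Qed.

Lemma bucket_step_LG_notch q :
  6 * q + 6 <= 6 * T + 22 ->
  bucket_step s T j [LG] (Bucket (6 * q + 4) (6 * q + 4) (6 * q + 4) (6 * q))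
    (Bucket (6 * q + 4) (6 * q + 4) (6 * q + 6) (6 * q + 6)).
Proof.
  intros Hroom H HHj; eapply reachable_place.
  - apply (place_drop_moves _ _ _ _ 0 (3 * s) (6 * T + 3 * s + 24) (6 * j + 1) (6 * q + 4) 2);
      drop_obligation ltac:(idtac; eval_bucket_cell j HHj).
    apply (fits_at_pos_blocked _ _ _ _ _ _ _ 0 1); [vm_compute; tauto|].
    right; eval_bucket_cell j HHj.
  - bucket_update j HHj.
Qed.

Definition layer : list piece := [LG; LS; LG; LG; Sq].

Definition element_pieces (ai : nat) : list piece :=
  [Ip; LG; Sq] ++ concat (repeat layer ai) ++ [Sq; Sq].

Lemma bucket_step_layer q :
  1 <= q -> 6 * q + 6 <= 6 * T + 22 ->
  bucket_step s T j layer (flat_bucket (6 * q)) (flat_bucket (6 * q + 6)).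
Proof.
  intros Hq Hroom; unfold layer, flat_bucket.
  change [LG; LS; LG; LG; Sq] with ([LG] ++ [LS] ++ [LG] ++ [LG] ++ [Sq]).
  eapply bucket_step_app; [apply bucket_step_LG_flat; lia|].
  eapply bucket_step_app; [apply bucket_step_LS; lia|].
  eapply bucket_step_app; [apply bucket_step_LG_hook; lia|].
  eapply bucket_step_app; [apply bucket_step_LG_notch; lia|].
  apply bucket_step_Sq; lia.
Qed.

Lemma bucket_step_layers t : forall q,
  1 <= q -> 6 * q + 6 * t <= 6 * T + 22 ->
  bucket_step s T j (concat (repeat layer t)) (flat_bucket (6 * q)) (flat_bucket (6 * q + 6 * t)).
Proof.
  induction t as [|t IH]; intros q Hq Hroom; cbn [repeat concat].
  - replace (6 * q + 6 * 0) with (6 * q) by lia; apply bucket_step_nil.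
  - eapply bucket_step_app; [apply bucket_step_layer; lia|].
    replace (6 * q + 6) with (6 * (q + 1)) by lia.
    replace (6 * q + 6 * S t) with (6 * (q + 1) + 6 * t) by lia.
    apply IH; lia.
Qed.

Lemma bucket_step_element ai q :
  6 * q + 6 * ai + 10 <= 6 * T + 22 ->
  bucket_step s T j (element_pieces ai) (loaded_bucket (6 * q))
    (loaded_bucket (6 * q + 6 * ai + 6)).
Proof.
  intros Hroom; unfold element_pieces.
  change ([Ip; LG; Sq] ++ ?rest) with ([Ip] ++ [LG] ++ [Sq] ++ rest).
  eapply bucket_step_app; [apply bucket_step_I; lia|].
  eapply bucket_step_app; [apply bucket_step_LG_notch; lia|].
  apply (bucket_step_app _ _ _ _ _ _ (flat_bucket (6 * (q + 1)))).
  { unfold flat_bucket; replace (6 * (q + 1)) with (6 * q + 6) by lia.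
    apply bucket_step_Sq; lia. }
  apply (bucket_step_app _ _ _ _ _ _ (flat_bucket (6 * (q + 1) + 6 * ai))).
  { apply bucket_step_layers; lia. }
  unfold flat_bucket, loaded_bucket.
  replace (6 * (q + 1) + 6 * ai) with (6 * q + 6 * ai + 6) by lia.
  change [Sq; Sq] with ([Sq] ++ [Sq]).
  apply (bucket_step_app _ _ _ _ _ _
    (Bucket (6 * q + 6 * ai + 8) (6 * q + 6 * ai + 8) (6 * q + 6 * ai + 6) (6 * q + 6 * ai + 6)));
    apply bucket_step_Sq; lia.
Qed.

End BucketSteps.

(** * The three phases of the game *)

(* After the first i elements, bucket j is [loaded_bucket (6 * load g a i j)]. *)
Definition load (g : nat -> nat) (a : list nat) (i j : nat) : nat :=
  list_sum (map (fun k => if g k =? j then nth k a 0 + 1 else 0) (seq 0 i)).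

Lemma load_succ g a i j :
  load g a (S i) j = load g a i j + (if g i =? j then nth i a 0 + 1 else 0).
Proof. unfold load; rewrite seq_S, map_app, list_sum_app; cbn; lia. Qed.

Lemma load_monotone g a i i' j : i <= i' -> load g a i j <= load g a i' j.
Proof. induction 1 as [|i' _ IH]; [lia|]; rewrite load_succ; lia. Qed.

Lemma load_sum_card g a j :
  load g a (length a) j = sum_sel a (fun k => g k =? j) + card_sel a (fun k => g k =? j).
Proof.
  unfold load, sum_sel, card_sel; induction (length a) as [|i IH]; [reflexivity|].
  rewrite seq_S, !map_app, filter_app, !list_sum_app, length_app, IH; cbn.
  destruct (g i =? j); cbn; lia.
Qed.

Lemma firstn_succ {A} (l : list A) d i :
  i < length l -> firstn (S i) l = firstn i l ++ [nth i l d].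
Proof.
  revert i; induction l as [|x l IH]; intros [|i] Hi; cbn in *; try lia; [reflexivity|].
  rewrite <- IH by lia; reflexivity.
Qed.

Lemma elements_reachable s T g a :
  0 < s -> length a = 3 * s -> (forall i, i < 3 * s -> g i < s) ->
  (forall j, j < s -> load g a (3 * s) j = T + 3) ->
  forall i, i <= 3 * s ->
  reachable (G_width s) (G_height s T) (bucket_board s T (fun _ => loaded_bucket 0))
    (flat_map element_pieces (firstn i a))
    (bucket_board s T (fun j => loaded_bucket (6 * load g a i j))).
Proof.
  intros Hs Hlen Hg Hfinal; induction i as [|i IH]; intros Hi; [apply reachable_nil|].
  rewrite (firstn_succ a 0) by lia; rewrite flat_map_app; cbn [flat_map]; rewrite app_nil_r.
  eapply reachable_app; [apply IH; lia|].
  set (j := g i); assert (Hj : j < s) by (apply Hg; lia).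
  assert (Hroom : load g a (S i) j <= T + 3).
  { rewrite <- (Hfinal j Hj); apply load_monotone; lia. }
  rewrite load_succ, Nat.eqb_refl in Hroom.
  eapply reachable_board_eq_r.
  - apply (bucket_step_element s T j Hs Hj (nth i a 0) (load g a i j)); [lia | reflexivity].
  - intros x y _ _; apply bucket_board_ext; intros j' _; unfold set_bucket.
    rewrite load_succ; fold j; destruct (Nat.eqb_spec j' j) as [->|Hne].
    + rewrite Nat.eqb_refl; f_equal; lia.
    + replace (j =? j') with false by (symmetry; apply Nat.eqb_neq; congruence).
      f_equal; lia.
Qed.

Definition full_bucket (T : nat) : bucket :=
  Bucket (6 * T + 22) (6 * T + 22) (6 * T + 22) (6 * T + 18).

Lemma top_off_reachable s T k :
  0 < s -> k <= s ->
  reachable (G_width s) (G_height s T)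
    (bucket_board s T (fun _ => loaded_bucket (6 * T + 18))) (repeat Ip k)
    (bucket_board s T (fun j => if j <? k then full_bucket T else loaded_bucket (6 * T + 18))).
Proof.
  intros Hs; induction k as [|k IH]; intros Hk; [apply reachable_nil|].
  cbn [repeat]; rewrite repeat_cons; eapply reachable_app; [apply IH; lia|].
  eapply reachable_board_eq_r.
  - apply (bucket_step_I s T k Hs ltac:(lia) (6 * T + 22) (6 * T + 22) (6 * T + 18) (6 * T + 18));
      [lia|].
    replace (k <? k) with false by lia; unfold loaded_bucket; f_equal; lia.
  - intros x y _ _; apply bucket_board_ext; intros j _; unfold set_bucket, full_bucket.
    destruct (Nat.eqb_spec j k) as [->|].
    + replace (k <? S k) with true by lia; f_equal; lia.
    + now replace (j <? S k) with (j <? k) by lia.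
Qed.

Definition full_board (s T : nat) : board := fun x y =>
  (1 <=? x) && (1 <=? y) && (y <=? 6 * T + 22) &&
  ((x <=? 6 * s) || (x =? 6 * s + 1) && (y <=? 6 * T + 20)
   || (x =? 6 * s + 2) && (y <=? 6 * T + 21) || (x =? 6 * s + 3) && (y =? 6 * T + 21)).

Lemma bucket_board_full s T H :
  (forall j, j < s -> H j = full_bucket T) ->
  forall x y, bucket_board s T H x y = full_board s T x y.
Proof.
  intros HH x y; unfold bucket_board, full_board.
  destruct (Nat.leb_spec 1 x), (Nat.leb_spec 1 y), (Nat.leb_spec y (6 * T + 22)),
    (Nat.leb_spec x (6 * s)), (Nat.leb_spec x (6 * s + 3)); cbn [andb orb]; try lia.
  - rewrite HH by lia; unfold full_bucket.
    destruct ((x - 1) mod 6) as [|[|[|[|[|[|]]]]]]; cbn [bucket_cell ht1 ht2 ht3 notch_ht]; lia.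
  - destruct (x - 6 * s) as [|[|[|[|]]]] eqn:?; cbn [lock_cell]; lia.
Qed.

Definition board_with_well (s h : nat) : board := fun x y =>
  (1 <=? x) && (x <=? 6 * s + 2) && (1 <=? y) && (y <=? h).

Lemma lock_reachable s T H :
  0 < s -> (forall j, j < s -> H j = full_bucket T) ->
  reachable (G_width s) (G_height s T) (bucket_board s T H) [RG]
    (board_with_well s (6 * T + 20)).
Proof.
  intros Hs HH; eapply reachable_place.
  - apply (place_drop_moves _ _ _ _ 2 (3 * s) (6 * T + 3 * s + 24) (6 * s + 1) (6 * T + 21) 0);
      drop_obligation ltac:(idtac; rewrite (bucket_board_full s T H HH); unfold full_board; lia).
    apply (fits_at_pos_blocked _ _ _ _ _ _ _ 0 0); [vm_compute; tauto|].
    right; rewrite (bucket_board_full s T H HH); unfold full_board; lia.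
  - set (B' := add_cells _ _).
    assert (HB' : forall x y, B' x y = full_board s T x y
      || existsb (fun c => (6 * s + 1 + 0 + fst c =? x) && (6 * T + 21 + snd c =? y)) (shape RG 2)).
    { intros x y; unfold B'; now rewrite add_cells_at_pos, (bucket_board_full s T H HH). }
    expand_shape; cbn [existsb fst snd] in HB'; unfold full_board in HB'.
    unfold G_width, G_height, rot_nbhd; intros x y Hx Hy.
    rewrite (clear_rows_band _ _ _ (6 * T + 20) 2); try lia.
    + unfold board_with_well; destruct (Nat.leb_spec y (6 * T + 20)),
        (Nat.leb_spec y (6 * T + 22 + 3 * s + 4 - 2)); rewrite ?HB'; lia.
    + intros z Hz; apply row_full_intro; intros x' Hx'; rewrite HB'; lia.
    + intros z Hz [Hlow|Hhigh];
        [apply (row_full_hole _ _ (6 * s + 3)) | apply (row_full_hole _ _ (6 * s + 1))];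
        rewrite ?HB'; lia.
Qed.

Lemma well_step_reachable s T h :
  0 < s -> h + 4 <= 6 * T + 20 ->
  reachable (G_width s) (G_height s T) (board_with_well s (h + 4)) [Ip] (board_with_well s h).
Proof.
  intros Hs Hh; eapply reachable_place.
  - apply (place_drop_moves _ _ _ _ 1 (3 * s) (6 * T + 3 * s + 23) (6 * s + 1) 1 0);
      drop_obligation ltac:(idtac; unfold board_with_well; lia).
    apply (fits_at_pos_blocked _ _ _ _ _ _ _ 2 0); [vm_compute; tauto | left; lia].
  - set (B' := add_cells _ _).
    assert (HB' : forall x y, B' x y = board_with_well s (h + 4) x y
      || existsb (fun c => (6 * s + 1 + 0 + fst c =? x) && (1 + snd c =? y)) (shape Ip 1))
      by (intros; apply add_cells_at_pos).
    expand_shape; cbn [existsb fst snd] in HB'; unfold board_with_well in HB' |- *.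
    unfold G_width, G_height, rot_nbhd; intros x y Hx Hy.
    rewrite (clear_rows_band _ _ _ 0 4); try lia.
    + destruct (Nat.leb_spec y 0), (Nat.leb_spec y (6 * T + 22 + 3 * s + 4 - 4)); rewrite ?HB'; lia.
    + intros z Hz; apply row_full_intro; intros x' Hx'; rewrite HB'; lia.
    + intros z Hz Hz'; apply (row_full_hole _ _ (6 * s + 3)); rewrite ?HB'; lia.
Qed.

Lemma well_clear_reachable s T K :
  0 < s -> 4 * K <= 6 * T + 20 ->
  reachable (G_width s) (G_height s T) (board_with_well s (4 * K)) (repeat Ip K)
    (board_with_well s 0).
Proof.
  intros Hs; induction K as [|K IH]; intros HK; [apply reachable_nil|].
  change (repeat Ip (S K)) with ([Ip] ++ repeat Ip K).
  eapply reachable_app; [|apply IH; lia].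
  replace (4 * S K) with (4 * K + 4) by lia; apply well_step_reachable; lia.
Qed.

Lemma G_pieces_reachable s T a g :
  0 < s -> length a = 3 * s -> Nat.Even T -> (forall i, i < 3 * s -> g i < s) ->
  (forall j, j < s -> load g a (3 * s) j = T + 3) ->
  reachable (G_width s) (G_height s T) (G_init s T) (G_pieces s T a) (board_with_well s 0).
Proof.
  intros Hs Hlen [t HT] Hg Hload.
  assert (Helements := elements_reachable s T g a Hs Hlen Hg Hload (3 * s) (le_n _)).
  replace (firstn (3 * s) a) with a in Helements by (rewrite <- Hlen; symmetry; apply firstn_all).
  assert (Hloaded : board_eq (G_width s) (G_height s T)
    (bucket_board s T (fun j => loaded_bucket (6 * load g a (3 * s) j)))
    (bucket_board s T (fun _ => loaded_bucket (6 * T + 18)))).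
  { intros x y _ _; apply bucket_board_ext; intros j Hj; rewrite Hload by exact Hj.
    f_equal; lia. }
  assert (Hfilled := top_off_reachable s T s Hs (le_n _)).
  assert (Hlocked : reachable (G_width s) (G_height s T)
    (bucket_board s T (fun j => if j <? s then full_bucket T else loaded_bucket (6 * T + 18)))
    [RG] (board_with_well s (6 * T + 20))).
  { apply lock_reachable; [exact Hs|]; intros j Hj; now replace (j <? s) with true by lia. }
  assert (Hcleared := well_clear_reachable s T (3 * T / 2 + 5) Hs ltac:(lia)).
  replace (4 * (3 * T / 2 + 5)) with (6 * T + 20) in Hcleared by lia.
  eapply reachable_board_eq_l; [intros x y _ _; apply G_init_bucket_board|].
  apply (reachable_app _ _ _ _ _ _ _ Helements).
  eapply reachable_board_eq_l; [exact Hloaded|].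
  apply (reachable_app _ _ _ _ _ _ _ Hfilled), (reachable_app _ _ _ _ _ _ _ Hlocked), Hcleared.
Qed.

Theorem theorem4 (s T : nat) (a : list nat) :
  0 < s ->
  three_partition_instance s T a ->
  tp_prop1 s T a -> tp_prop2 T -> tp_prop3 s T a ->
  yes_instance s T a ->
  exists (traj : list (list move)) (B : board),
    play (G_width s) (G_height s T) (G_init s T) (G_pieces s T a) traj = Some B /\
    (forall x y, 1 <= x <= G_width s -> 1 <= y <= G_height s T -> B x y = false).
Proof.
  intros Hs (Hlen & _ & _) Hthree Heven _ (g & Hg & Hblocks).
  assert (Hload : forall j, j < s -> load g a (3 * s) j = T + 3).
  { intros j Hj; rewrite <- Hlen, load_sum_card, (Hthree _ (Hblocks j Hj)), Hblocks by exact Hj.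
    reflexivity. }
  destruct (G_pieces_reachable s T a g Hs Hlen Heven Hg Hload) as (traj & B & Hplay & HB).
  exists traj, B; split; [exact Hplay|].
  intros x y Hx Hy; rewrite HB by assumption; unfold board_with_well; lia.
Qed.
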